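(* Work in Minkowski space $\mathbb{R}^{3,1}$ with metric $\eta=\operatorname{diag}(-1,1,1,1)$, indices lowered with $\eta$. For a nonzero 4-vector $k$, let $S_k$ be the set of symmetric tensors $$T_{\mu\nu}=u_\mu u_\nu+(u^\lambda u_\lambda)\,d_\mu d_\nu$$ where $u=(1,\vec v)$ with $|\vec v|\le1$, $d=(0,\hat d)$ with $|\hat d|=1$ and $\hat d\cdot\vec v=0$, and $u^\mu k_\mu=d^\mu k_\mu=0$. Then: (i) every $T\in S_k$ satisfies $k^\mu T_{\mu\nu}=0$; (ii) if $k$ is timelike, $S_k=\emptyset$; (iii) if $k$ is spacelike, the real linear span of $S_k$ equals the space of all symmetric tensors $T_{\mu\nu}$ with $k^\mu T_{\mu\nu}=0$; (iv) if $k$ is null, the real linear span of $S_k$ is the one-dimensional space $\mathbb{R}\,k_\mu k_\nu$; in particular for every null $l$, $l^\mu T_{\mu\nu}$ is non-spacelike for every $T$ in this span. *)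

(* vectors are row vectors 'rV[R]_4 of contravariant
   components x^mu (index 0 = time), R a real closed field. *)
From HB Require Import structures.
From mathcomp Require Import all_boot all_order all_algebra.
Set Implicit Arguments. Unset Strict Implicit. Unset Printing Implicit Defensive.
Import Order.TTheory GRing.Theory Num.Theory.
Local Open Scope ring_scope.

Section Mink.
Variable R : rcfType.

Definition eta (i : 'I_4) : R := if i == ord0 then -1 else 1.

Definition mink (x y : 'rV[R]_4) : R := \sum_(i < 4) eta i * x ord0 i * y ord0 i.

Definition sdot (x y : 'rV[R]_4) : R :=
  \sum_(i < 4 | i != ord0) x ord0 i * y ord0 i.

Definition lower (x : 'rV[R]_4) : 'rV[R]_4 := \row_i (eta i * x ord0 i).

Definition tensorT (u d : 'rV[R]_4) : 'M[R]_4 :=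
  (lower u)^T *m lower u + mink u u *: ((lower d)^T *m lower d).

Definition inSk (k : 'rV[R]_4) (T : 'M[R]_4) : Prop :=
  exists u d : 'rV[R]_4,
    [/\ u ord0 ord0 = 1, sdot u u <= 1,
        d ord0 ord0 = 0, sdot d d = 1 & sdot d u = 0] /\
    [/\ mink u k = 0, mink d k = 0 & T = tensorT u d].

(* contraction k^mu T_{mu nu}, a row vector of covariant components *)
Definition contr (k : 'rV[R]_4) (T : 'M[R]_4) : 'rV[R]_4 := k *m T.

Definition in_span (S : 'M[R]_4 -> Prop) (T : 'M[R]_4) : Prop :=
  exists (n : nat) (c : 'I_n -> R) (A : 'I_n -> 'M[R]_4),
    (forall i, S (A i)) /\ T = \sum_(i < n) c i *: A i.

Definition timelike (k : 'rV[R]_4) := mink k k < 0.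
Definition spacelike (k : 'rV[R]_4) := 0 < mink k k.
Definition null (k : 'rV[R]_4) := k != 0 /\ mink k k = 0.

End Mink.

(* Part (i): u and d are Minkowski-orthogonal to k, and k^mu u_mu u_nu is
   (u.k) u_nu, so k T = 0.
   Parts (ii) and (iv) rest on one identity: for u = (1, v) with u.k = 0,
       k.k = |k_s - k^0 v|^2 + (k^0)^2 (1 - |v|^2),
   whose right-hand side is nonnegative when |v| <= 1.  So no admissible u is
   orthogonal to a timelike k, and for null k it forces u = k / k^0, whence
   u.u = 0 and S_k = { k k / (k^0)^2 }; any contraction l.(k k) is a multiple
   of the null vector k, hence null.
   Part (iii): for spacelike k, w = (1, k^0 k_s / |k_s|^2) is timelike and
   orthogonal to k.  For a spatial unit q orthogonal to k, the tensors built
   from the null vectors w +- rho q (rho^2 = -w.w) and T(w, q) = w w - rho^2 q q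
   lie in S_k; solving this linear system puts w w, w q + q w and q q in the
   span, hence p p for every p orthogonal to k, hence every symmetric product
   by polarisation.  A symmetric T with k T = 0 is the symmetrisation of
   sum_i (row i P)^T (row i T), P the projection onto the vectors orthogonal
   to k, which concludes. *)

From Pilot Require Import Defs.
From HB Require Import structures.
From mathcomp Require Import all_boot all_order all_algebra.
From mathcomp Require Import ring lra.
Set Implicit Arguments. Unset Strict Implicit. Unset Printing Implicit Defensive.
Import Order.TTheory GRing.Theory Num.Theory.
Local Open Scope ring_scope.

Section Minkowski.
Variable R : rcfType.
Implicit Types (x y z u d k p q l : 'rV[R]_4) (A B T : 'M[R]_4) (S : 'M[R]_4 -> Prop).

Lemma minkS x y : mink x y = - (x 0 0 * y 0 0) + sdot x y.
Proof.
rewrite /mink (bigD1 ord0) //= {1}/Defs.eta /= mulN1r mulNr; congr (_ + _).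
by apply: eq_bigr => i /negbTE i0; rewrite /Defs.eta i0 mul1r.
Qed.

Lemma dot_trE x y : (x *m y^T) 0 0 = x 0 0 * y 0 0 + sdot x y.
Proof.
rewrite mxE (bigD1 ord0) //= !mxE; congr (_ + _).
by apply: eq_bigr => i _; rewrite !mxE.
Qed.

Lemma entryDZ x y (c : R) i : (x + c *: y) 0 i = x 0 i + c * y 0 i.
Proof. by rewrite !mxE. Qed.

Lemma sdotC x y : sdot x y = sdot y x.
Proof. by apply: eq_bigr => i _; rewrite mulrC. Qed.

Lemma sdotDl x y z : sdot (x + y) z = sdot x z + sdot y z.
Proof. by rewrite /sdot -big_split; apply: eq_bigr => i _; rewrite !mxE mulrDl. Qed.

Lemma sdotZl (a : R) x y : sdot (a *: x) y = a * sdot x y.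
Proof. by rewrite /sdot mulr_sumr; apply: eq_bigr => i _; rewrite !mxE mulrA. Qed.

Lemma sdotDr x y z : sdot x (y + z) = sdot x y + sdot x z.
Proof. by rewrite !(sdotC x) sdotDl. Qed.

Lemma sdotZr (a : R) x y : sdot x (a *: y) = a * sdot x y.
Proof. by rewrite !(sdotC x) sdotZl. Qed.

Lemma minkDl x y z : mink (x + y) z = mink x z + mink y z.
Proof. by rewrite !minkS sdotDl mxE; ring. Qed.

Lemma minkZl (a : R) x y : mink (a *: x) y = a * mink x y.
Proof. by rewrite !minkS sdotZl mxE; ring. Qed.

Lemma minkZr (a : R) x y : mink x (a *: y) = a * mink x y.
Proof. by rewrite !minkS sdotZr mxE; ring. Qed.

Lemma sdot_ge0 x : 0 <= sdot x x.
Proof. by rewrite sumr_ge0 // => i _; rewrite -expr2 sqr_ge0. Qed.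

Lemma sdot_gt0 x : x 0 0 = 0 -> x != 0 -> 0 < sdot x x.
Proof.
move=> x0 xn0; have xi2_ge0 i : 0 <= x 0 i * x 0 i by rewrite -expr2 sqr_ge0.
rewrite lt_def sdot_ge0 andbT; apply: contra xn0 => /eqP xx0.
apply/eqP/rowP => i; rewrite mxE; have [->|i0] := eqVneq i ord0; first exact: x0.
have := psumr_eq0P (fun j _ => xi2_ge0 j) xx0 i0.
by move/eqP; rewrite mulf_eq0 orbb => /eqP.
Qed.

Lemma eta_sqr i : Defs.eta R i * Defs.eta R i = 1.
Proof. by rewrite /Defs.eta; case: (i == ord0); rewrite ?mulrNN mulr1. Qed.

Lemma lowerK x : lower (lower x) = x.
Proof. by apply/rowP => i; rewrite !mxE mulrA eta_sqr mul1r. Qed.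

Lemma mink_lower x y : mink (lower x) (lower y) = mink x y.
Proof.
apply: eq_bigr => i _; rewrite !mxE.
by transitivity (Defs.eta R i * Defs.eta R i * (Defs.eta R i * x 0 i * y 0 i));
  [ring | rewrite eta_sqr mul1r].
Qed.

Lemma lower_mul_tr x y : lower x *m y^T = (mink x y)%:M.
Proof.
apply/matrixP => i j; rewrite !ord1 !mxE eqxx mulr1n.
by apply: eq_bigr => l _; rewrite !mxE.
Qed.

Lemma mink_lowerl x y : mink (lower x) y = (x *m y^T) 0 0.
Proof. by rewrite -{2}(lowerK x) lower_mul_tr mxE eqxx mulr1n. Qed.

Lemma mul_lower_tr x y : x *m (lower y)^T = (mink y x)%:M.
Proof. by apply: trmx_inj; rewrite trmx_mul trmxK lower_mul_tr tr_scalar_mx. Qed.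

Lemma mulmx_tr_rows m n r (A : 'M[R]_(m, n)) (B : 'M[R]_(m, r)) :
  A^T *m B = \sum_i (row i A)^T *m row i B.
Proof.
apply/matrixP => a b; rewrite !mxE summxE.
by apply: eq_bigr => i _; rewrite !mxE big_ord1 !mxE.
Qed.

Definition sq x : 'M[R]_4 := (lower x)^T *m lower x.
Definition sym2 x y : 'M[R]_4 := (lower x)^T *m lower y + (lower y)^T *m lower x.

Lemma sqDZ x y (c : R) : sq (x + c *: y) = sq x + c *: sym2 x y + c ^+ 2 *: sq y.
Proof. by apply/matrixP => i j; rewrite !mxE !big_ord1 !mxE; ring. Qed.

Lemma sqZ (c : R) x : sq (c *: x) = c ^+ 2 *: sq x.
Proof. by apply/matrixP => i j; rewrite !mxE !big_ord1 !mxE; ring. Qed.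

Lemma sym2Zr (c : R) x y : sym2 x (c *: y) = c *: sym2 x y.
Proof. by apply/matrixP => i j; rewrite !mxE !big_ord1 !mxE; ring. Qed.

Lemma sym2C x y : sym2 x y = sym2 y x.
Proof. by rewrite /sym2 addrC. Qed.

Lemma sym2_polar x y : sym2 x y = sq (x + y) - sq x - sq y.
Proof. by apply/matrixP => i j; rewrite !mxE !big_ord1 !mxE; ring. Qed.

Lemma tensorTE u d : tensorT u d = sq u + mink u u *: sq d.
Proof. by []. Qed.

Lemma tensorT_sym u d : (tensorT u d)^T = tensorT u d.
Proof. by rewrite /tensorT linearD /= linearZ /= !trmx_mul !trmxK. Qed.

Lemma contr_sq k x : contr k (sq x) = mink x k *: lower x.
Proof. by rewrite /contr /sq mulmxA mul_lower_tr mul_scalar_mx. Qed.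

Lemma contr_tensorT k u d :
  mink u k = 0 -> mink d k = 0 -> contr k (tensorT u d) = 0.
Proof.
move=> uk dk; rewrite /contr mulmxDr -scalemxAr.
by rewrite -!/(contr k _) !contr_sq uk dk !scale0r scaler0 addr0.
Qed.

Lemma span0 S : in_span S 0.
Proof. by exists 0%N, (fun _ => 0), (fun _ => 0); split => [[]//|]; rewrite big_ord0. Qed.

Lemma span_mem S A : S A -> in_span S A.
Proof.
move=> SA; exists 1%N, (fun _ => 1), (fun _ => A); split => //.
by rewrite big_ord1 scale1r.
Qed.

Lemma spanD S A B : in_span S A -> in_span S B -> in_span S (A + B).
Proof.
move=> [n [c [F [SF ->]]]] [m [e [G [SG ->]]]].
exists (n + m)%N, (fun i => match split i with inl j => c j | inr j => e j end),
  (fun i => match split i with inl j => F j | inr j => G j end); split.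
  by move=> i; case: (split i).
rewrite big_split_ord /=; congr (_ + _); apply: eq_bigr => i _.
  by rewrite -[lshift _ _]/(unsplit (inl i)) unsplitK.
by rewrite -[rshift _ _]/(unsplit (inr i)) unsplitK.
Qed.

Lemma spanZ S a A : in_span S A -> in_span S (a *: A).
Proof.
move=> [n [c [F [SF ->]]]]; exists n, (fun i => a * c i), F; split => //.
by rewrite scaler_sumr; apply: eq_bigr => i _; rewrite scalerA.
Qed.

Lemma spanB S A B : in_span S A -> in_span S B -> in_span S (A - B).
Proof. by move=> SA SB; apply: spanD => //; rewrite -scaleN1r; apply: spanZ. Qed.

Lemma span_sum S (I : Type) (r : seq I) (P : pred I) (F : I -> 'M[R]_4) :
  (forall i, P i -> in_span S (F i)) -> in_span S (\sum_(i <- r | P i) F i).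
Proof. by move=> SF; apply: big_ind => //; [apply: span0 | apply: spanD]. Qed.

Lemma span_ind S (P : 'M[R]_4 -> Prop) :
  P 0 -> (forall A B, P A -> P B -> P (A + B)) ->
  (forall a A, P A -> P (a *: A)) -> (forall A, S A -> P A) ->
  forall A, in_span S A -> P A.
Proof.
move=> P0 PD PZ SP A [n [c [F [SF ->]]]].
by apply: big_ind => // i _; apply/PZ/SP.
Qed.

Lemma span_solve S (X Y Z : 'M[R]_4) (c : R) : c != 0 ->
  in_span S (X + c *: Y + c ^+ 2 *: Z) ->
  in_span S (X + (- c) *: Y + (- c) ^+ 2 *: Z) ->
  in_span S (X - c ^+ 2 *: Z) ->
  [/\ in_span S X, in_span S Y & in_span S Z].
Proof.
move=> c0 Sp Sm S0; rewrite sqrrN in Sm.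
have SZ : in_span S Z.
  have -> : Z = (4 * c ^+ 2)^-1 *:
      ((X + c *: Y + c ^+ 2 *: Z) + (X + - c *: Y + c ^+ 2 *: Z)
       - ((X - c ^+ 2 *: Z) + (X - c ^+ 2 *: Z))).
    by apply/matrixP => i j; rewrite !mxE; field.
  by apply/spanZ/spanB; apply: spanD.
split => //.
- have -> : X = (X - c ^+ 2 *: Z) + c ^+ 2 *: Z by rewrite subrK.
  by apply: spanD => //; apply: spanZ.
- have -> : Y = (2 * c)^-1 *: ((X + c *: Y + c ^+ 2 *: Z) - (X + - c *: Y + c ^+ 2 *: Z)).
    by apply/matrixP => i j; rewrite !mxE; field; rewrite c0.
  by apply/spanZ/spanB.
Qed.

Lemma exists_kernel_vector m n (M : 'M[R]_(m, n)) :
  (m < n)%N -> exists2 x : 'rV[R]_n, x != 0 & x *m M^T = 0.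
Proof.
move=> mn; have ker_ne0 : kermx M^T != 0.
  rewrite kermx_eq0 /row_free; apply: contraL mn => /eqP <-.
  by rewrite -leqNgt rank_leq_col.
case: (pickP (fun i => row i (kermx M^T) != 0)) => [i ri | rows0].
  by exists (row i (kermx M^T)); rewrite // -row_mul mulmx_ker row0.
case/eqP: ker_ne0; apply/row_matrixP => i; rewrite row0.
by apply/eqP/negbFE/rows0.
Qed.

Lemma spatial_rescale x : x 0 0 = 0 -> x != 0 ->
  exists2 s : R, s != 0 & sdot (s^-1 *: x) (s^-1 *: x) = 1.
Proof.
move=> x0 xn0; have xx_gt0 := sdot_gt0 x0 xn0.
exists (Num.sqrt (sdot x x)); first by rewrite gt_eqF // sqrtr_gt0.
rewrite sdotZl sdotZr -{3}(sqr_sqrtr (ltW xx_gt0)).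
by field; rewrite gt_eqF // sqrtr_gt0.
Qed.

(* A spatial unit vector orthogonal to two given vectors: the three
   conditions d^0 = 0, d.a = 0, d.b = 0 leave a nonzero solution in R^4. *)
Lemma exists_spatial_orth a b : exists d,
  [/\ d 0 0 = 0, sdot d d = 1, sdot d a = 0 & sdot d b = 0].
Proof.
pose M := col_mx (col_mx a b) (delta_mx 0 0 : 'rV[R]_4).
have [x xn0] := @exists_kernel_vector _ _ M isT.
rewrite /M !tr_col_mx !mul_mx_row => /eqP.
rewrite !row_mx_eq0 => /andP[/andP[/eqP xa /eqP xb] /eqP xe].
have x0 : x 0 0 = 0.
  by move/matrixP: xe => /(_ 0 0); rewrite !mxE (bigD1 0) //= big1 => [|i /negbTE i0];
    rewrite !mxE ?i0 ?mulr0 // mulr1 addr0.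
have sdot_x y : x *m y^T = 0 -> sdot x y = 0.
  by move/matrixP => /(_ 0 0); rewrite dot_trE x0 mul0r add0r mxE.
have [s _ xx1] := spatial_rescale x0 xn0.
exists (s^-1 *: x); split => //.
- by rewrite mxE x0 mulr0.
- by rewrite sdotZl sdot_x ?mulr0.
- by rewrite sdotZl sdot_x ?mulr0.
Qed.

Lemma inSk_tensorT k u d : u 0 0 = 1 -> sdot u u <= 1 -> d 0 0 = 0 ->
  sdot d d = 1 -> sdot d u = 0 -> mink u k = 0 -> sdot d k = 0 ->
  inSk k (tensorT u d).
Proof.
move=> u0 uu d0 dd du uk dk; exists u, d; split; split => //.
by rewrite minkS d0 mul0r oppr0 add0r.
Qed.

(* For a null u with u^0 = 1 the second term of T vanishes, so x_mu x_nu
   itself lies in S_k as soon as u is orthogonal to k. *)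
Lemma inSk_sq k u : u 0 0 = 1 -> sdot u u = 1 -> mink u k = 0 -> inSk k (sq u).
Proof.
move=> u0 uu uk; have [d [d0 dd du dk]] := exists_spatial_orth u k.
have -> : sq u = tensorT u d.
  by rewrite tensorTE minkS u0 uu mul1r addNr scale0r addr0.
by apply: inSk_tensorT; rewrite ?uu.
Qed.

(* For u = (1, v) orthogonal to k, the norm of k splits as a sum of
   nonnegative terms when |v| <= 1:
   k.k = |k_s - k^0 v|^2 + (k^0)^2 (1 - |v|^2). *)
Lemma mink_orth k u : u 0 0 = 1 -> mink u k = 0 ->
  mink k k = sdot (k - k 0 0 *: u) (k - k 0 0 *: u) + k 0 0 ^+ 2 * (1 - sdot u u).
Proof.
rewrite minkS => u0 uk; rewrite u0 mul1r in uk.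
rewrite -scaleNr !(sdotDl, sdotDr, sdotZl, sdotZr) minkS (sdotC k u).
transitivity (- (k 0 0 * k 0 0) + sdot k k - 2 * k 0 0 * (- k 0 0 + sdot u k)).
  by rewrite uk mulr0 subr0.
by ring.
Qed.

Lemma mink_ge0_orth k u : u 0 0 = 1 -> sdot u u <= 1 -> mink u k = 0 ->
  0 <= mink k k.
Proof.
move=> u0 uu uk; rewrite (mink_orth u0 uk) addr_ge0 ?sdot_ge0 //.
by rewrite mulr_ge0 ?sqr_ge0 ?subr_ge0.
Qed.

Lemma null_orth_parallel k u : mink k k = 0 -> u 0 0 = 1 -> sdot u u <= 1 ->
  mink u k = 0 -> k = k 0 0 *: u.
Proof.
move=> kk u0 uu uk; set w := k - k 0 0 *: u.
have w0 : w 0 0 = 0 by rewrite !mxE u0 mulr1 subrr.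
have ww_ge0 := sdot_ge0 w.
have rest_ge0 : 0 <= k 0 0 ^+ 2 * (1 - sdot u u) by rewrite mulr_ge0 ?sqr_ge0 ?subr_ge0.
have ww0 : sdot w w = 0.
  by apply/eqP; rewrite eq_le ww_ge0 andbT; move: (mink_orth u0 uk); rewrite kk; lra.
apply/eqP; rewrite -subr_eq0 -/w; apply/negPn/negP => /(sdot_gt0 w0).
by rewrite ww0 ltxx.
Qed.

Section Spacelike.
Variable k : 'rV[R]_4.
Hypothesis k_spacelike : spacelike k.

Local Notation V := (in_span (inSk k)).
Let k0 := k 0 0.
Let K2 := sdot k k.

Lemma k0_sqr_lt : k0 ^+ 2 < K2.
Proof. by move: k_spacelike; rewrite /spacelike minkS -/k0 -/K2 addrC subr_gt0 expr2. Qed.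

Lemma K2_gt0 : 0 < K2.
Proof. exact: le_lt_trans (sqr_ge0 k0) k0_sqr_lt. Qed.

(* w = (1, (k^0 / |k_s|^2) k_s): a timelike vector orthogonal to k, which
   exists precisely because k is spacelike. *)
Definition wk : 'rV[R]_4 := \row_i (if i == ord0 then 1 else k0 / K2 * k 0 i).

Lemma wk0 : wk 0 0 = 1.
Proof. by rewrite mxE eqxx. Qed.

Lemma sdot_wk x : sdot wk x = k0 / K2 * sdot k x.
Proof. by rewrite /sdot mulr_sumr; apply: eq_bigr => i /negbTE i0; rewrite !mxE i0 mulrA. Qed.

Lemma mink_wk : mink wk k = 0.
Proof. by rewrite minkS wk0 sdot_wk -/K2 mulfVK ?gt_eqF ?K2_gt0 // mul1r addNr. Qed.

Lemma sdot_wk_wk : sdot wk wk = k0 ^+ 2 / K2.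
Proof. by rewrite sdot_wk sdotC sdot_wk -/K2; field; rewrite gt_eqF ?K2_gt0. Qed.

(* rho^2 = -w.w > 0 *)
Let rho := Num.sqrt (1 - k0 ^+ 2 / K2).

Lemma rho_sqr : rho ^+ 2 = 1 - k0 ^+ 2 / K2.
Proof.
by rewrite sqr_sqrtr // subr_ge0 ler_pdivrMr ?K2_gt0 // mul1r ltW ?k0_sqr_lt.
Qed.

Lemma mink_wk_wk : mink wk wk = - rho ^+ 2.
Proof. by rewrite minkS wk0 sdot_wk_wk rho_sqr mul1r opprB addrC. Qed.

(* For a spatial unit q orthogonal to k, w +- rho q are null vectors and
   T(w, q) = w w - rho^2 q q; solving for the three tensors shows that
   w w, w q + q w and q q all lie in the span. *)
Lemma span_unit_spatial q : q 0 0 = 0 -> sdot q q = 1 -> sdot q k = 0 ->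
  [/\ V (sq wk), V (sym2 wk q) & V (sq q)].
Proof.
move=> q0 qq qk.
have qw : sdot q wk = 0 by rewrite sdotC sdot_wk sdotC qk mulr0.
have qk' : mink q k = 0 by rewrite minkS q0 mul0r oppr0 add0r.
have V_null c : c ^+ 2 = rho ^+ 2 -> V (sq wk + c *: sym2 wk q + c ^+ 2 *: sq q).
  move=> c2; rewrite -sqDZ; apply/span_mem/inSk_sq.
  - by rewrite entryDZ wk0 q0 mulr0 addr0.
  - rewrite !(sdotDl, sdotDr, sdotZl, sdotZr) sdot_wk_wk qw (sdotC wk) qw qq.
    by rewrite mulrA -expr2 c2 rho_sqr; ring.
  - by rewrite minkDl minkZl mink_wk qk' mulr0 addr0.
have V_tensor : V (sq wk - rho ^+ 2 *: sq q).
  rewrite -scaleNr -mink_wk_wk -tensorTE; apply/span_mem/inSk_tensorT => //.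
  - exact: wk0.
  - by rewrite sdot_wk_wk ler_pdivrMr ?K2_gt0 // mul1r ltW ?k0_sqr_lt.
  - exact: mink_wk.
apply: span_solve V_tensor.
- by rewrite gt_eqF // sqrtr_gt0 subr_gt0 ltr_pdivrMr ?K2_gt0 // mul1r k0_sqr_lt.
- exact: V_null.
- by apply: V_null; rewrite sqrrN.
Qed.

Lemma span_sq_wk : V (sq wk).
Proof.
have [d [d0 dd _ dk]] := exists_spatial_orth k k.
by case: (span_unit_spatial d0 dd dk).
Qed.

Lemma span_spatial q : q 0 0 = 0 -> sdot q k = 0 -> V (sq q) /\ V (sym2 wk q).
Proof.
move=> q0 qk; have [->|qn0] := eqVneq q 0.
  have l0 : lower 0 = 0 :> 'rV[R]_4 by apply/rowP => i; rewrite !mxE mulr0.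
  by rewrite /sq /sym2 l0 trmx0 !mul0mx mulmx0 addr0; split; apply: span0.
have [s s0 qq] := spatial_rescale q0 qn0.
have -> : q = s *: (s^-1 *: q) by rewrite scalerA mulfV ?scale1r.
have [||_ Vsym Vsq] := span_unit_spatial _ qq; rewrite ?sdotZl ?qk ?mulr0 //.
  by rewrite mxE q0 mulr0.
by rewrite sqZ sym2Zr; split; apply: spanZ.
Qed.

(* Every p orthogonal to k splits as a spatial vector orthogonal to k plus
   a multiple of w, so x_mu x_nu is in the span. *)
Lemma span_sq_orth p : mink p k = 0 -> V (sq p).
Proof.
move=> pk; set q := p - p 0 0 *: wk.
have q0 : q 0 0 = 0 by rewrite /q -scaleNr entryDZ wk0 mulr1 addrN.
have qk : sdot q k = 0.
  rewrite /q -scaleNr sdotDl sdotZl sdot_wk -/K2 mulfVK ?gt_eqF ?K2_gt0 //.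
  by move: pk; rewrite minkS -/k0 => pk; lra.
have [Vq Vqw] := span_spatial q0 qk.
have -> : p = q + p 0 0 *: wk by rewrite subrK.
rewrite sqDZ sym2C.
by apply: spanD; [apply: spanD; last apply: spanZ | apply/spanZ/span_sq_wk].
Qed.

Lemma span_sym2_orth p q : mink p k = 0 -> mink q k = 0 -> V (sym2 p q).
Proof.
move=> pk qk; rewrite sym2_polar.
by apply: spanB; [apply: spanB|]; apply: span_sq_orth; rewrite ?minkDl ?pk ?qk ?addr0.
Qed.

(* Converse inclusion: with the projection P = 1 - k^T k_low / (k.k), which
   maps into the vectors orthogonal to k, a symmetric T with k T = 0 equals
   P^T T and thus the symmetrisation of sum_i (row i P)^T (row i T). *)
Lemma span_annihilated T : T^T = T -> contr k T = 0 -> V T.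
Proof.
rewrite /contr => Tsym kT.
have Tk : T *m k^T = 0 by rewrite -{1}Tsym -trmx_mul kT trmx0.
pose P := 1%:M - (mink k k)^-1 *: (k^T *m lower k).
have Pk : P *m k^T = 0.
  rewrite mulmxBl mul1mx -scalemxAl -mulmxA lower_mul_tr mul_mx_scalar scalerA.
  by rewrite mulVf ?scale1r ?subrr // gt_eqF.
have PT : P^T *m T = T.
  rewrite linearB /= trmx1 linearZ /= trmx_mul trmxK mulmxBl mul1mx.
  by rewrite -scalemxAl -mulmxA kT mulmx0 scaler0 subr0.
have orth_row A i : A *m k^T = 0 -> mink (lower (row i A)) k = 0.
  by move=> Ak; rewrite mink_lowerl -row_mul Ak row0 mxE.
have sum_rows :
    \sum_i sym2 (lower (row i P)) (lower (row i T)) = P^T *m T + (P^T *m T)^T.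
  rewrite trmx_mul trmxK !mulmx_tr_rows -big_split.
  by apply: eq_bigr => i _; rewrite /sym2 !lowerK.
have -> : T = 2^-1 *: \sum_i sym2 (lower (row i P)) (lower (row i T)).
  by rewrite sum_rows PT Tsym -mulr2n -scaler_nat scalerA mulVf ?scale1r // pnatr_eq0.
by apply/spanZ/span_sum => i _; apply: span_sym2_orth; apply: orth_row.
Qed.

End Spacelike.

Lemma null_time_ne0 k : null k -> k 0 0 != 0.
Proof.
move=> [kn0 kk]; apply: contraNneq kn0 => k0; have := sdot_gt0 k0.
by rewrite -kk minkS k0 mul0r oppr0 add0r => /implyP; rewrite ltxx; case: (k == 0).
Qed.

Lemma inSk_nullE k T : null k -> inSk k T -> T = (k 0 0 ^+ 2)^-1 *: sq k.
Proof.
move=> nk [u [d [[u0 uu _ _ _] [uk _ ->]]]]; have [_ kk] := nk.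
have ku := null_orth_parallel kk u0 uu uk.
have uu0 : mink u u = 0.
  apply: (mulfI (mulf_neq0 (null_time_ne0 nk) (null_time_ne0 nk))).
  by rewrite mulr0 -mulrA -minkZr -ku -minkZl -ku.
by rewrite tensorTE uu0 scale0r addr0 {2}ku sqZ scalerA mulVf ?scale1r // sqrf_eq0 null_time_ne0.
Qed.

Lemma inSk_null_sq k : null k -> inSk k (sq ((k 0 0)^-1 *: k)).
Proof.
move=> nk; have k0 := null_time_ne0 nk; have [_ kk] := nk.
apply: inSk_sq; first by rewrite mxE mulVf.
- have kk_sdot : sdot k k = k 0 0 * k 0 0 by move: kk; rewrite minkS; lra.
  by rewrite sdotZl sdotZr kk_sdot; field.
- by rewrite minkZl kk mulr0.
Qed.

(* Contracting k_mu k_nu with any vector gives a multiple of the null k. *)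
Lemma mink_contr_null_sq l k (a : R) : mink k k = 0 ->
  mink (contr l (a *: sq k)) (contr l (a *: sq k)) = 0.
Proof.
move=> kk; rewrite /contr -scalemxAr -/(contr l _) contr_sq.
by rewrite !(minkZl, minkZr) mink_lower kk !mulr0.
Qed.

Lemma span_inSk_sym_contr k T :
  in_span (inSk k) T -> T^T = T /\ contr k T = 0.
Proof.
move: T; apply: (span_ind (P := fun A => A^T = A /\ contr k A = 0)).
- by rewrite trmx0 /contr mulmx0.
- move=> A B [AS Ak] [BS Bk].
  by rewrite linearD /= AS BS /contr mulmxDr -!/(contr _ _) Ak Bk addr0.
- move=> a A [AS Ak].
  by rewrite linearZ /= AS /contr -scalemxAr -/(contr _ _) Ak scaler0.
- by move=> A [u [d [_ [uk dk ->]]]]; rewrite tensorT_sym contr_tensorT.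
Qed.

Lemma span_null_multiple k T : null k ->
  in_span (inSk k) T -> exists a, T = a *: sq k.
Proof.
move=> nk; move: T; apply: (span_ind (P := fun A => exists a, A = a *: sq k)).
- by exists 0; rewrite scale0r.
- by move=> A B [a ->] [b ->]; exists (a + b); rewrite scalerDl.
- by move=> c A [a ->]; exists (c * a); rewrite scalerA.
- by move=> A /(inSk_nullE nk) ->; eexists.
Qed.

Lemma span_null_sq k : null k -> in_span (inSk k) (sq k).
Proof.
move=> nk; have k0 := null_time_ne0 nk.
have -> : sq k = k 0 0 ^+ 2 *: sq ((k 0 0)^-1 *: k).
  by rewrite sqZ scalerA -exprMn mulfV ?expr1n ?scale1r.
exact/spanZ/span_mem/inSk_null_sq.
Qed.

End Minkowski.

Theorem mainTheorem11 (R : rcfType) (k : 'rV[R]_4) (hk : k != 0) :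
  [/\ (forall T, inSk k T -> contr k T = 0),
      (timelike k -> forall T, ~ inSk k T),
      (spacelike k -> forall T : 'M[R]_4,
          in_span (inSk k) T <-> (T^T = T /\ contr k T = 0)) &
      (null k ->
         (forall T : 'M[R]_4,
            in_span (inSk k) T <-> exists a : R, T = a *: ((lower k)^T *m lower k))
         /\ (forall (l : 'rV[R]_4) (T : 'M[R]_4), null l -> in_span (inSk k) T ->
               mink (contr l T) (contr l T) <= 0))].
Proof.
split.
- by move=> T [u [d [_ [uk dk ->]]]]; apply: contr_tensorT.
- move=> kt T [u [d [[u0 uu _ _ _] [uk _ _]]]].
  by move: kt; rewrite /timelike ltNge (mink_ge0_orth u0 uu uk).
- move=> ks T; split; first exact: span_inSk_sym_contr.
  by case; apply: span_annihilated.
- move=> nk; split=> [T|l T _ /(span_null_multiple nk) [a ->]].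
    split; first exact: span_null_multiple.
    by case=> a ->; apply/spanZ/span_null_sq.
  by rewrite mink_contr_null_sq //; case: nk.
Qed.
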